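(* Let $k$ be a field and let $A$ be a just infinite $k$-algebra that does not satisfy a polynomial identity and is not simple. Then the center $Z(A)$ is a field which is a finite dimensional extension of $k$.
   Context: All rings are associative unital algebras over a field. A $k$-algebra $A$ is called just infinite if $\dim_k(A)=\infty$ and every nonzero two-sided ideal of $A$ has finite codimension in $A$. *)

From HB Require Import structures.
From mathcomp Require Import all_boot all_order all_algebra.
Set Implicit Arguments. Unset Strict Implicit. Unset Printing Implicit Defensive.
Import Order.TTheory GRing.Theory.
Local Open Scope ring_scope.

Section Defs.
Local Unset Implicit Arguments.
Variable k : fieldType. Variable A : algType k.

Definition lincomb (s : seq A) (c : 'I_(size s) -> k) : A :=
  \sum_(i < size s) c i *: s`_i.

Definition fin_dim : Prop :=
  exists s : seq A, forall a : A, exists c, a = lincomb s c.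

Definition two_sided_ideal (I : A -> Prop) : Prop :=
  [/\ I 0, (forall x y, I x -> I y -> I (x + y)) &
      (forall a x, I x -> I (a * x) /\ I (x * a))].

Definition nonzero_set (I : A -> Prop) : Prop := exists x, I x /\ x != 0.

(* dim_k (A / I) < infinity *)
Definition fin_codim (I : A -> Prop) : Prop :=
  exists s : seq A, forall a : A, exists c, I (a - lincomb s c).

Definition just_infinite : Prop :=
  ~ fin_dim /\
  forall I, two_sided_ideal I -> nonzero_set I -> fin_codim I.

Definition simple_algebra : Prop :=
  (1 : A) != 0 /\
  forall I, two_sided_ideal I -> (forall x, I x -> x = 0) \/ (forall x, I x).

(* A satisfies a polynomial identity: there is a nonzero element f of the
   free algebra k<x_0,...,x_{n-1}> with f(a_0,...,a_{n-1}) = 0 for all a.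
   f is given by a duplicate-free list of words s and coefficients c. *)
Definition satisfies_PI : Prop :=
  exists (n : nat) (s : seq (seq 'I_n)) (c : seq 'I_n -> k),
    [/\ uniq s, (exists2 w, w \in s & c w != 0) &
        forall a : 'I_n -> A, \sum_(w <- s) c w *: \prod_(i <- w) a i = 0].

Definition central (z : A) : Prop := forall a : A, z * a = a * z.

End Defs.
Arguments lincomb {k A} s c.
Arguments fin_dim {k} A.
Arguments two_sided_ideal {k A} I.
Arguments fin_codim {k A} I.
Arguments just_infinite {k} A.
Arguments simple_algebra {k} A.
Arguments satisfies_PI {k} A.
Arguments central {k A} z.

From HB Require Import structures.
From mathcomp Require Import all_boot all_algebra fingroup perm.
From Stdlib Require Import Classical.
Import GRing.Theory.
Set Implicit Arguments. Unset Strict Implicit. Unset Printing Implicit Defensive.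
Local Open Scope ring_scope.

(* The standard polynomial s_m is multilinear and alternating, so it vanishes
   modulo every ideal J such that A/J is generated by fewer than m elements as
   a module over the centre.  As A is not PI, s_m(x) s_m(y) = 0 fails for every
   m, while every nonzero ideal has finite codimension.  Hence A is prime: if
   xAy = 0, the ideals {u | uAy = 0} and its right annihilator are nonzero with
   zero product.  For a nonzero central z, which is then regular, the generators
   of A/zA generate every A/z^nA over the centre, so the intersection of the
   ideals z^nA is nonzero and has finite codimension; therefore some nonzero
   polynomial of degree < n in z lies in z^nA, which makes z invertible.
   Finally a proper nonzero ideal I meets the field Z(A) trivially, so Z(A)
   embeds k-linearly into the finite dimensional A/I. *)

Section Center.
Variables (k : fieldType) (A : algType k).

Lemma central0 : central (0 : A).
Proof. by move=> a; rewrite mul0r mulr0. Qed.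

Lemma central_add (x y : A) : central x -> central y -> central (x + y).
Proof. by move=> hx hy a; rewrite mulrDl mulrDr hx hy. Qed.

Lemma central_mul (x y : A) : central x -> central y -> central (x * y).
Proof. by move=> hx hy a; rewrite -mulrA hy mulrA hx mulrA. Qed.

Lemma central_exp (z : A) n : central z -> central (z ^+ n).
Proof. by move=> hz a; apply/esym/commrX/esym. Qed.

Lemma central_scale c (x : A) : central x -> central (c *: x).
Proof. by move=> hx a; rewrite -scalerAl hx scalerAr. Qed.

Lemma central_alg c : central (c%:A : A).
Proof. by move=> a; rewrite mulr_algl mulr_algr. Qed.

Lemma central_lincomb (L : seq A) c :
  (forall x, x \in L -> central x) -> central (lincomb L c).
Proof.
move=> hL; rewrite /lincomb; elim/big_ind: _ => [|x y|i _].
- exact: central0.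
- exact: central_add.
- exact/central_scale/hL/mem_nth.
Qed.

Lemma central_rinv (z w : A) : central z -> z * w = 1 -> central w /\ w * z = 1.
Proof.
move=> hz zw; have wz : w * z = 1 by rewrite -hz.
split=> // a.
by rewrite -[w * a]mulr1 -zw mulrA -(mulrA w a z) -(hz a) mulrA wz mul1r.
Qed.

End Center.

Section Ideals.
Variables (k : fieldType) (A : algType k) (J : A -> Prop).
Hypothesis hJ : two_sided_ideal J.

Lemma ideal0 : J 0.
Proof. by case: hJ. Qed.

Lemma ideal_add x y : J x -> J y -> J (x + y).
Proof. by case: hJ => _ h _; apply: h. Qed.

Lemma ideal_lmul a x : J x -> J (a * x).
Proof. by case: hJ => _ _ h hx; case: (h a x hx). Qed.

Lemma ideal_rmul a x : J x -> J (x * a).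
Proof. by case: hJ => _ _ h hx; case: (h a x hx). Qed.

Lemma ideal_scale c x : J x -> J (c *: x).
Proof. by rewrite -mulr_algl; apply: ideal_lmul. Qed.

Lemma ideal_sum (I : Type) (r : seq I) (F : I -> A) :
  (forall i, J (F i)) -> J (\sum_(i <- r) F i).
Proof. by move=> h; elim/big_ind: _ => //; [exact: ideal0|exact: ideal_add]. Qed.

End Ideals.

Lemma ideal_cap (k : fieldType) (A : algType k) (I : Type) (J : I -> A -> Prop) :
  (forall i, two_sided_ideal (J i)) -> two_sided_ideal (fun x => forall i, J i x).
Proof.
move=> hJ; split=> [i|x y hx hy i|a x hx]; first exact: ideal0.
  exact: ideal_add.
by split=> i; [apply: ideal_lmul | apply: ideal_rmul].
Qed.

Lemma not_simple_proper_ideal (k : fieldType) (A : algType k) :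
  (1 : A) != 0 -> ~ simple_algebra A ->
  exists I : A -> Prop, [/\ two_sided_ideal I, nonzero_set _ _ I & ~ I 1].
Proof.
move=> nz1 hsimp; apply: NNPP => hn; apply: hsimp; split=> // I hI.
have [I1|nI1] := classic (I 1).
  by right=> x; rewrite -[x]mul1r; apply: (ideal_rmul hI).
left=> x Ix; apply/eqP; apply: contraT => nx.
by case: hn; exists I; split=> //; exists x.
Qed.

Section ModuloIdeals.
Variables (k : fieldType) (A : algType k).

Definition spans_mod_center (J : A -> Prop) (t : seq A) : Prop :=
  forall x, exists c : 'I_(size t) -> A,
    (forall i, central (c i)) /\ J (x - \sum_i c i * t`_i).

Lemma fin_codim_spans_mod_center (J : A -> Prop) :
  fin_codim J -> exists t, spans_mod_center J t.
Proof.
case=> t ht; exists t => x; have [d hd] := ht x.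
exists (fun i => (d i)%:A); split=> [i|]; first exact: central_alg.
by under eq_bigr => i _ do rewrite mulr_algl.
Qed.

Definition principal (d : A) : A -> Prop := fun x => exists b, x = d * b.

Lemma principal_ideal (d : A) : central d -> two_sided_ideal (principal d).
Proof.
move=> hd; split; first by exists 0; rewrite mulr0.
  by move=> _ _ [b ->] [b' ->]; exists (b + b'); rewrite mulrDr.
move=> a _ [b ->]; split; last by exists (b * a); rewrite mulrA.
by exists (a * b); rewrite mulrA -hd mulrA.
Qed.

Lemma spans_mod_principal_exp (z : A) (t : seq A) n :
  central z -> spans_mod_center (principal z) t ->
  spans_mod_center (principal (z ^+ n)) t.
Proof.
move=> hz ht; elim: n => [|n IH] x.
  exists (fun _ => 0); split=> [i|]; first exact: central0.
  by exists x; rewrite big1 ?subr0 ?mul1r // => i _; rewrite mul0r.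
have [c [hc [b hb]]] := IH x; have [d [hd [b' hb']]] := ht b.
exists (fun i => c i + z ^+ n * d i); split=> [i|].
  by apply/central_add/central_mul/hd/central_exp.
exists b'; rewrite exprSr -mulrA -hb'.
under eq_bigr => i _ do rewrite mulrDl -mulrA.
by rewrite big_split /= -mulr_sumr opprD addrA hb mulrBr.
Qed.

Lemma lincomb_cons (x : A) (L : seq A) (c : 'I_(size (x :: L)) -> k) :
  lincomb (x :: L) c = c ord0 *: x + lincomb L (fun i => c (lift ord0 i)).
Proof. by rewrite /lincomb big_ord_recl. Qed.

Lemma ideal_dependent (K : A -> Prop) (s : seq A) n (v : 'I_n -> A) :
  two_sided_ideal K -> (size s < n)%N -> (forall a, exists c, K (a - lincomb s c)) ->
  exists2 c : 'I_n -> k, (exists i, c i != 0) & K (\sum_i c i *: v i).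
Proof.
move=> hK hn hs; have [E hE] := fin_all_exists (fun i => hs (v i)).
pose M : 'M[k]_(n, size s) := \matrix_(i, j) E i j.
have [i0 [j0 hij]] : exists i j, kermx M i j != 0.
  apply: NNPP => hker; suff /eqP : kermx M = 0.
    rewrite -mxrank_eq0 mxrank_ker subn_eq0 leqNgt.
    by rewrite (leq_ltn_trans (rank_leq_col M) hn).
  apply/matrixP => i j; rewrite [RHS]mxE; apply: NNPP => ne.
  by apply: hker; exists i, j; apply/eqP.
exists (kermx M i0); first by exists j0.
have -> : \sum_i kermx M i0 i *: v i =
    \sum_i kermx M i0 i *: (v i - lincomb s (E i)) +
    \sum_i kermx M i0 i *: lincomb s (E i).
  by rewrite -big_split; apply: eq_bigr => i _; rewrite /= -scalerDr subrK.
have -> : \sum_i kermx M i0 i *: lincomb s (E i) = 0.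
  under eq_bigr => i _ do rewrite scaler_sumr.
  rewrite exchange_big big1 // => l _.
  have := congr1 (fun N : 'M_(n, size s) => N i0 l) (mulmx_ker M).
  rewrite !mxE => e.
  rewrite -[RHS](scale0r s`_l) -e scaler_suml.
  by rewrite /=; apply: eq_bigr => i _; rewrite scalerA /M mxE.
by rewrite /= addr0; apply: ideal_sum => // i; apply/(ideal_scale hK)/hE.
Qed.

Lemma lreg_unit_of_poly_mem_principal (z : A) n (c : 'I_n -> k) :
  GRing.lreg z -> (exists i, c i != 0) ->
  principal (z ^+ n) (\sum_i c i *: z ^+ i) -> exists w, z * w = 1.
Proof.
move=> reg; elim: n c => [|n IH] c [i ci] [b hb]; first by case: i {ci}.
rewrite big_ord_recl expr0 exprS -mulrA in hb.
have shift : \sum_(j < n) c (lift ord0 j) *: z ^+ lift ord0 j =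
    z * \sum_(j < n) c (lift ord0 j) *: z ^+ j.
  by rewrite mulr_sumr; apply: eq_bigr => j _; rewrite lift0 exprS scalerAr.
rewrite shift in hb.
have [c0|c0] := eqVneq (c ord0) 0.
  rewrite c0 scale0r add0r in hb.
  apply: (IH (fun j => c (lift ord0 j))); last by exists b; apply: reg hb.
  by case: (unliftP ord0 i) ci => [j ->|->]; [exists j | rewrite c0 eqxx].
exists ((c ord0)^-1 *: (z ^+ n * b - \sum_j c (lift ord0 j) *: z ^+ j)).
by rewrite -scalerAr mulrBr -hb addrK scalerA mulVf // scale1r.
Qed.

End ModuloIdeals.

Lemma big_prod_split_at (R : pzSemiRingType) (I : eqType) (r : seq I) (i0 : I)
    (F0 : I -> R) :
  uniq r -> i0 \in r -> exists L R', forall F : I -> R,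
    (forall i, i != i0 -> F i = F0 i) -> \prod_(i <- r) F i = L * F i0 * R'.
Proof.
elim: r => [|x r IH] //= /andP [xr ur]; rewrite in_cons.
have [-> _ | ne /= ir] := eqVneq i0 x.
  exists 1, (\prod_(i <- r) F0 i) => F hF; rewrite big_cons mul1r.
  by congr (_ * _); apply: eq_big_seq => i ii; apply: hF; apply: contraNneq xr => <-.
have [L [R' hLR]] := IH ur ir.
exists (F0 x * L), R' => F hF.
by rewrite big_cons hLR // hF 1?eq_sym // !mulrA.
Qed.

Section StandardPolynomial.
Variables (k : fieldType) (A : algType k).

Definition standard_poly m (a : 'I_m -> A) : A :=
  \sum_(s : 'S_m) ((-1) ^+ s : k) *: \prod_(i < m) a (s i).

Lemma standard_poly_ext m (a b : 'I_m -> A) :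
  a =1 b -> standard_poly a = standard_poly b.
Proof. by move=> h; apply: eq_bigr => s _; congr (_ *: _); apply: eq_bigr. Qed.

Lemma standard_poly_slot m (a : 'I_m -> A) j : exists L R : 'S_m -> A, forall u,
  standard_poly [eta a with j |-> u] = \sum_(s : 'S_m) L s * u * R s.
Proof.
have split_at (s : 'S_m) : exists p : A * A, forall F : 'I_m -> A,
    (forall i, i != (s^-1)%g j -> F i = a (s i)) ->
    \prod_(i < m) F i = p.1 * F ((s^-1)%g j) * p.2.
  have [L [R hLR]] := big_prod_split_at (fun i => a (s i)) (index_enum_uniq _)
    (mem_index_enum ((s^-1)%g j)).
  by exists (L, R).
have [p hp] := fin_all_exists split_at.
exists (fun s : 'S_m => ((-1) ^+ s : k) *: (p s).1), (fun s => (p s).2) => u.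
rewrite /standard_poly; apply: eq_bigr => s _.
rewrite (hp s) /= ?permKV ?eqxx ?scalerAl // => i.
by case: (s i =P j) => [<-|//]; rewrite permK eqxx.
Qed.

Lemma standard_poly_alt m (a : 'I_m -> A) i1 i2 :
  i1 != i2 -> a i1 = a i2 -> standard_poly a = 0.
Proof.
move=> ne eqa; pose t := tperm i1 i2.
have oddMt s : odd_perm (s * t)%g = ~~ odd_perm s.
  by rewrite odd_permM odd_tperm ne addbT.
rewrite /standard_poly (bigID (fun s : 'S_m => odd_perm s)) /=.
apply: (canLR (subrK _)); rewrite add0r -sumrN.
rewrite (reindex_inj (mulIg t)); apply: eq_big => //= s.
rewrite oddMt => /negPf ->; rewrite expr1 expr0 scaleN1r scale1r; congr (- _).
by apply: eq_bigr => /= i _; rewrite permM /t; case: tpermP => // ->.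
Qed.

Lemma standard_poly_pigeonhole m (t : seq A) (a : 'I_m -> A) :
  (size t < m)%N -> (forall i, a i \in t) -> standard_poly a = 0.
Proof.
move=> hm ht; have /injectivePn [i1 [i2 ne e]] : ~~ injectiveb a.
  apply/injectiveP => inj; move: hm; rewrite ltnNge.
  have <- : size (map a (enum 'I_m)) = m by rewrite size_map size_enum_ord.
  apply/negP/negPn/uniq_leq_size => [|x /mapP [i _ ->] //].
  by rewrite map_inj_uniq ?enum_uniq.
exact: standard_poly_alt ne e.
Qed.
End StandardPolynomial.

Section StandardPolynomialIdeals.
Variables (k : fieldType) (A : algType k) (J : A -> Prop) (t : seq A).
Hypotheses (hJ : two_sided_ideal J) (ht : spans_mod_center J t).

Lemma sandwich_sum_mem_ideal (I : finType) (L R : I -> A) :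
  (forall u, u \in t -> J (\sum_s L s * u * R s)) -> forall x, J (\sum_s L s * x * R s).
Proof.
move=> hl x; pose g u := \sum_s L s * u * R s.
have gD : {morph g : u v / u + v}.
  by move=> u v; rewrite -big_split; apply: eq_bigr => s _; rewrite mulrDr mulrDl.
have g0 : g 0 = 0 by rewrite /g big1 // => s _; rewrite mulr0 mul0r.
have gC c u : central c -> g (c * u) = c * g u.
  by move=> hc; rewrite /g mulr_sumr; apply: eq_bigr => s _; rewrite !mulrA hc.
have [c [hc hx]] := ht x.
rewrite -/(g x) -(subrK (\sum_i c i * t`_i) x) gD.
apply: (ideal_add hJ).
  by apply: (ideal_sum hJ) => s; apply/(ideal_rmul hJ)/(ideal_lmul hJ).
rewrite (big_morph g gD g0); apply: (ideal_sum hJ) => i.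
by rewrite gC //; apply/(ideal_lmul hJ)/hl/mem_nth.
Qed.

Lemma standard_poly_mem_ideal m : (size t < m)%N ->
  forall a : 'I_m -> A, J (standard_poly a).
Proof.
move=> hm.
suff H n : (n <= m)%N -> forall a : 'I_m -> A,
    (forall i : 'I_m, (n <= i)%N -> a i \in t) -> J (standard_poly a).
  by move=> a; apply: (H m (leqnn m)) => i; rewrite leqNgt ltn_ord.
elim: n => [_|n IH hn] a ha.
  by rewrite (standard_poly_pigeonhole hm (fun i => ha i (leq0n i))); apply: ideal0.
pose j : 'I_m := Ordinal hn.
have [L [R hLR]] := standard_poly_slot a j.
have -> : standard_poly a = \sum_s L s * a j * R s.
  by rewrite -hLR; apply: standard_poly_ext => i /=; case: eqP => // ->.
apply: (@sandwich_sum_mem_ideal _ L R) => u ut; rewrite -hLR.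
apply: (IH (ltnW hn)) => i ni /=; case: eqP => // ne.
apply: ha; rewrite ltn_neqAle ni andbT; apply/eqP => e; apply: ne.
exact: val_inj.
Qed.

End StandardPolynomialIdeals.

(* The monomial of [standard_poly x * standard_poly y] indexed by a pair of
   permutations, reading [x_i] as the variable [i] and [y_i] as [m + i]. *)
Definition standard_monomial m (p : 'S_m * 'S_m) : seq 'I_(m + m) :=
  [seq lshift m (p.1 i) | i <- index_enum 'I_m] ++
  [seq rshift m (p.2 i) | i <- index_enum 'I_m].

Lemma standard_monomial_inj m : injective (@standard_monomial m).
Proof.
move=> [s1 s2] [t1 t2] /eqP; rewrite eqseq_cat ?size_map //.
case/andP => /eqP /eq_in_map e1 /eqP /eq_in_map e2.
congr pair; apply/permP => i.
  by apply: (@lshift_inj m m); apply: e1; rewrite mem_index_enum.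
by apply: (@rshift_inj m m); apply: e2; rewrite mem_index_enum.
Qed.

Lemma PI_of_standard_poly_mul (k : fieldType) (A : algType k) m :
  (forall a b : 'I_m -> A, standard_poly a * standard_poly b = 0) -> satisfies_PI A.
Proof.
move=> h.
pose sg (p : 'S_m * 'S_m) : k := (-1) ^+ p.1 * (-1) ^+ p.2.
pose c w := \sum_(p | standard_monomial p == w) sg p.
have cw p : c (standard_monomial p) = sg p.
  rewrite /c (eq_bigl (pred1 p)) ?big_pred1_eq // => q.
  by rewrite /= (inj_eq (@standard_monomial_inj m)).
exists (m + m)%N, [seq standard_monomial p | p <- index_enum ('S_m * 'S_m)%type], c.
split.
- by rewrite map_inj_uniq ?index_enum_uniq //; apply: standard_monomial_inj.
- exists (standard_monomial (1%g, 1%g)); first by rewrite map_f ?mem_index_enum.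
  by rewrite cw /sg !odd_perm1 expr0 mulr1 oner_eq0.
move=> a; rewrite big_map.
transitivity (standard_poly (fun i => a (lshift m i)) *
              standard_poly (fun i => a (rshift m i))); last exact: h.
rewrite /standard_poly big_distrlr pair_big /=; apply/esym/eq_bigr => p _.
by rewrite cw big_cat !big_map /sg -scalerAl -scalerAr scalerA.
Qed.

Section FreeFamilies.
Variables (k : fieldType) (A : algType k).

Definition free_family (L : seq A) : Prop :=
  forall c, lincomb L c = 0 -> forall i, c i = 0.

Lemma free_cons (L : seq A) z :
  free_family L -> ~ (exists c, z = lincomb L c) -> free_family (z :: L).
Proof.
move=> freeL nz c; rewrite lincomb_cons => hc.
have c0 : c ord0 = 0.
  apply: NNPP => /eqP c0; apply: nz.
  exists (fun i => - (c ord0)^-1 * c (lift ord0 i)).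
  rewrite /lincomb; under eq_bigr => i _ do rewrite -scalerA.
  have e : lincomb L (fun i => c (lift ord0 i)) = - (c ord0 *: z).
    by apply/eqP; rewrite -addr_eq0 addrC hc.
  rewrite -scaler_sumr -/(lincomb L _) e.
  by rewrite scaleNr scalerN opprK scalerA mulVf // scale1r.
move: hc; rewrite c0 scale0r add0r => /freeL hL i.
by case: (unliftP ord0 i) => [j ->|->].
Qed.

Lemma bounded_free_spanning (P : A -> Prop) N :
  (forall L, (forall x, x \in L -> P x) -> free_family L -> (size L <= N)%N) ->
  exists L, (forall x, x \in L -> P x) /\ forall z, P z -> exists c, z = lincomb L c.
Proof.
move=> hb.
suff H d L : (N - size L < d)%N -> (forall x, x \in L -> P x) -> free_family L ->
    exists L, (forall x, x \in L -> P x) /\ forall z, P z -> exists c, z = lincomb L c.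
  by apply: (H N.+1 [::]) => [|//|c _ []]; rewrite ?ltnS ?leq_subr.
elim: d L => [|d IH] L hd hL freeL; first by rewrite ltn0 in hd.
have [span|] := classic (forall z, P z -> exists c, z = lincomb L c).
  by exists L.
move=> /not_all_ex_not [z /(@imply_to_and (P z)) [Pz nz]].
have hzL x : x \in z :: L -> P x by rewrite in_cons => /predU1P [->|/hL].
have freezL := free_cons freeL nz.
have /= ltLN := hb _ hzL freezL; apply: IH hzL freezL.
by rewrite -ltnS (leq_trans _ hd) // ltnS /= subnS prednK // subn_gt0.
Qed.

End FreeFamilies.

Section JustInfinite.
Variables (k : fieldType) (A : algType k).
Hypotheses (hJI : just_infinite A) (hPI : ~ satisfies_PI A).

Lemma just_infinite_oner_neq0 : (1 : A) != 0.
Proof.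
case: hJI => nfd _; apply/eqP => e; apply: nfd; exists [::] => a.
exists (fun _ => 0); rewrite /lincomb big1 => [|[] //].
by rewrite -[a]mulr1 e mulr0.
Qed.

Lemma just_infinite_prime (x y : A) : (forall a, x * a * y = 0) -> x = 0 \/ y = 0.
Proof.
move=> hxy; apply: NNPP => /not_or_and [/eqP nx /eqP ny].
pose I1 u := forall a, u * a * y = 0.
pose I2 v := forall u, I1 u -> u * v = 0.
have hI1 : two_sided_ideal I1.
  split=> [a|u v hu hv a|c u hu]; first by rewrite !mul0r.
    by rewrite !mulrDl hu hv addr0.
  by split=> a; [rewrite -2!mulrA [u * _]mulrA hu mulr0 | rewrite -(mulrA u) hu].
have hI2 : two_sided_ideal I2.
  split=> [u _|u v hu hv w hw|c v hv]; first by rewrite mulr0.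
    by rewrite mulrDr hu // hv // addr0.
  by split=> u hu; rewrite mulrA hv ?mul0r //; apply: (ideal_rmul hI1).
have I2y : I2 y by move=> u /(_ 1); rewrite mulr1.
have [t1 ht1] := fin_codim_spans_mod_center (hJI.2 I1 hI1 (ex_intro _ x (conj hxy nx))).
have [t2 ht2] := fin_codim_spans_mod_center (hJI.2 I2 hI2 (ex_intro _ y (conj I2y ny))).
apply: hPI; apply: (@PI_of_standard_poly_mul _ _ (size t1 + size t2).+1) => a b.
apply: (standard_poly_mem_ideal hI2 ht2 _ b); first by rewrite ltnS leq_addl.
by apply: (standard_poly_mem_ideal hI1 ht1); rewrite ltnS leq_addr.
Qed.

Lemma cap_ideals_nonzero (I : Type) (J : I -> A -> Prop) (t : seq A) :
  (forall i, two_sided_ideal (J i)) -> (forall i, spans_mod_center (J i) t) ->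
  nonzero_set _ _ (fun x => forall i, J i x).
Proof.
move=> hJ ht; apply: NNPP => J0; apply: hPI.
apply: (@PI_of_standard_poly_mul _ _ (size t).+1) => a b.
suff -> : standard_poly a = 0 by rewrite mul0r.
apply: NNPP => /eqP ne; apply: J0; exists (standard_poly a); split=> // i.
exact: (standard_poly_mem_ideal (hJ i) (ht i) (ltnSn _)).
Qed.

Lemma central_lreg (z : A) : central z -> z != 0 -> GRing.lreg z.
Proof.
move=> hz nz x y e; apply/eqP; rewrite -subr_eq0; apply/eqP.
have [z0|//] : z = 0 \/ x - y = 0.
  by apply: just_infinite_prime => a; rewrite hz -mulrA mulrBr e subrr mulr0.
by rewrite z0 eqxx in nz.
Qed.

Lemma central_unit (z : A) : central z -> z != 0 ->
  exists w, central w /\ z * w = 1 /\ w * z = 1.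
Proof.
move=> hz nz; have reg := central_lreg hz nz.
have hzn n := principal_ideal (central_exp n hz).
have [t ht] : exists t, spans_mod_center (principal z) t.
  apply/fin_codim_spans_mod_center/(hJI.2 _ (principal_ideal hz)).
  by exists z; split=> //; exists 1; rewrite mulr1.
pose K x := forall n, principal (z ^+ n) x.
have hK : two_sided_ideal K := ideal_cap hzn.
have nzK := cap_ideals_nonzero hzn (fun n => spans_mod_principal_exp n hz ht).
have [s hs] := hJI.2 K hK nzK.
have [c nzc Kc] := ideal_dependent (fun i : 'I_(size s).+1 => z ^+ i) hK (ltnSn _) hs.
have [w zw] := lreg_unit_of_poly_mem_principal reg nzc (Kc _).
by exists w; have [] := central_rinv hz zw.
Qed.

Lemma central_mem_proper_ideal (I : A -> Prop) (z : A) :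
  two_sided_ideal I -> ~ I 1 -> central z -> I z -> z = 0.
Proof.
move=> hI nI1 hz Iz; apply: NNPP => /eqP nz.
have [w [_ [zw _]]] := central_unit hz nz.
by apply: nI1; rewrite -zw; apply: (ideal_rmul hI).
Qed.

Lemma center_fin_dim : ~ simple_algebra A ->
  exists s : seq A, (forall x, x \in s -> central x) /\
    forall z, central z -> exists c, z = lincomb s c.
Proof.
move=> hsimp.
have [I [hI nzI nI1]] := not_simple_proper_ideal just_infinite_oner_neq0 hsimp.
have [s hs] := hJI.2 I hI nzI.
apply: (bounded_free_spanning (N := size s)) => L hL freeL.
rewrite leqNgt; apply/negP => lt.
have [c [i ci] Ic] := ideal_dependent (fun i => L`_i) hI lt hs.
have := freeL c (central_mem_proper_ideal hI nI1 (central_lincomb c hL) Ic) i.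
by move/eqP; rewrite (negPf ci).
Qed.

End JustInfinite.

Theorem proposition2p3 (k : fieldType) (A : algType k) :
  just_infinite A -> ~ satisfies_PI A -> ~ simple_algebra A ->
  (* Z(A) is a field *)
  ((1 : A) != 0 /\
   forall z : A, central z -> z != 0 ->
     exists w : A, central w /\ z * w = 1 /\ w * z = 1) /\
  (* Z(A) is finite dimensional over k *)
  (exists s : seq A, (forall x, x \in s -> central x) /\
     forall z : A, central z -> exists c, z = lincomb s c).
Proof.
move=> hJI hPI hsimp; split; last exact: center_fin_dim.
by split; [exact: just_infinite_oner_neq0 | exact: central_unit].
Qed.
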